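(* Let $D$ be a digraph rooted at $r$, let $v \in V(D) \setminus \{r\}$, and let $L \subseteq D$ be $v$-large. Then for every $I \in \mathcal{G}_L(v)$ there is an $(r,v)$-path-system $\mathcal{P}$ in $L$ such that $\mathcal{P} \setminus \{rv\} \in \mathfrak{P}_D(v) \cap \mathfrak{P}_L(v)$ and $I \subseteq E^+(\mathcal{P})$, where $\mathcal{P} \setminus \{rv\}$ denotes $\mathcal{P}$ with the trivial one-edge path $rv$ removed (if it belongs to $\mathcal{P}$).
   Context: Digraphs have no loops or parallel edges; $H - rv$ denotes $H$ with the edge $rv$ deleted if present. $\mathrm{in}_H(v)$ is the set of edges of $H$ with head $v$. An $(x,y)$-path is a directed path from $x$ to $y$; an $(x,y)$-path-system is a set of pairwise internally disjoint $(x,y)$-paths. $E^+(\mathcal{P})$ is the set of terminal edges of the paths in $\mathcal{P}$. For a digraph $H$ rooted at $r$, $\mathcal{G}_H(v)$ is the set of all $I \subseteq \mathrm{in}_H(v)$ for which there is an $(r,v)$-path-system $\mathcal{P}$ in $H$ with $E^+(\mathcal{P}) = I$. For distinct $x,y$ with $xy \notin E$, an $(x,y)$-separation is a set $S \subseteq V\setminus\{x,y\}$ meeting every $(x,y)$-path. A set of paths $\mathcal{P}$ and a vertex set $S$ are orthogonal if each path of $\mathcal{P}$ meets $S$ in exactly one vertex and $S \subseteq \bigcup_{P\in\mathcal{P}}V(P)$. An $(x,y)$-path-system is Erdős–Menger if some $(x,y)$-separation is orthogonal to it. $\mathfrak{P}_H(v)$ is the set of Erdős–Menger $(r,v)$-path-systems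 in $H - rv$. A spanning subdigraph $L \subseteq D$ is $v$-large if some $\mathcal{P} \in \mathfrak{P}_D(v)$ has all its paths in $L$, and $rv \in E(L)$ whenever $rv \in E(D)$. *)

(* Digraphs on an arbitrary (possibly infinite) vertex type V,
   given by an edge relation (no parallel edges); sets are predicates. *)
From Stdlib Require Import List.
Import ListNotations.
Set Implicit Arguments.

Section Digraphs.
Variable V : Type.
Definition digraph := V -> V -> Prop.

Definition loopless (H : digraph) : Prop := forall x, ~ H x x.

Definition subdigraph (L D : digraph) : Prop := forall a b, L a b -> D a b.

Definition del_edge (H : digraph) (r v : V) : digraph :=
  fun a b => H a b /\ ~ (a = r /\ b = v).

Definition in_edges (H : digraph) (v : V) (e : V * V) : Prop :=
  snd e = v /\ H (fst e) (snd e).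

Fixpoint walk (H : digraph) (p : list V) : Prop :=
  match p with
  | x :: ((y :: _) as q) => H x y /\ walk H q
  | _ => True
  end.

Definition is_path (H : digraph) (x y : V) (p : list V) : Prop :=
  NoDup p /\ walk H p /\ hd_error p = Some x /\ last p x = y.

Definition path_system (H : digraph) (x y : V) (P : list V -> Prop) : Prop :=
  (forall p, P p -> is_path H x y p) /\
  (forall p q, P p -> P q -> p <> q ->
     forall w, In w p -> In w q -> w = x \/ w = y).

Definition term_edge (p : list V) (e : V * V) : Prop :=
  exists pre, p = pre ++ [fst e; snd e].

Definition Eplus (P : list V -> Prop) (e : V * V) : Prop :=
  exists p, P p /\ term_edge p e.

Definition Gset (H : digraph) (r v : V) (I : V * V -> Prop) : Prop :=
  (forall e, I e -> in_edges H v e) /\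
  exists P, path_system H r v P /\ (forall e, I e <-> Eplus P e).

Definition separation (H : digraph) (x y : V) (S : V -> Prop) : Prop :=
  x <> y /\ ~ H x y /\
  (forall w, S w -> w <> x /\ w <> y) /\
  (forall p, is_path H x y p -> exists w, In w p /\ S w).

Definition orthogonal (P : list V -> Prop) (S : V -> Prop) : Prop :=
  (forall p, P p -> exists! w, In w p /\ S w) /\
  (forall w, S w -> exists p, P p /\ In w p).

Definition erdos_menger (H : digraph) (x y : V) (P : list V -> Prop) : Prop :=
  path_system H x y P /\ exists S, separation H x y S /\ orthogonal P S.

Definition frakP (H : digraph) (r v : V) (P : list V -> Prop) : Prop :=
  erdos_menger (del_edge H r v) r v P.

Definition v_large (D L : digraph) (r v : V) : Prop :=
  subdigraph L D /\
  (exists P, frakP D r v P /\ forall p, P p -> walk L p) /\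
  (D r v -> L r v).

Definition remove_rv (r v : V) (P : list V -> Prop) : list V -> Prop :=
  fun p => P p /\ p <> [r; v].

End Digraphs.

From Stdlib Require Import List Lia PeanoNat Classical ClassicalEpsilon Wf_nat.
Import ListNotations.

(* Take the Erdos-Menger system Q of D - rv that lies in L, with its orthogonal separation Sep,
   and a path system PI of L realising I. Every path of PI other than rv meets Sep; its segment
   from the last Sep-vertex to v is a tail. Tails are disjoint away from v, and by the
   separation property no tail meets a Q-path before that path's Sep-vertex. A decreasing
   iteration pairs every tail t with a Q-path q at a common vertex q_x = t_y such that no path
   of Q meets t after t_y before its own cut point. Rerouting each paired q along t from q_x
   gives a path system of L - rv, still orthogonal to Sep and hence Erdos-Menger both in
   L - rv and in D - rv, whose terminal edges include those of PI; the edge rv, when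
   it is in L, is added as a one-edge path. *)

Section Paths.
Context {V : Type}.

Lemma In_nth_iff (l : list V) x d : In x l <-> exists i, i < length l /\ nth i l d = x.
Proof. split; [intros; apply In_nth; auto | intros [i [Hi <-]]; apply nth_In; auto]. Qed.

Lemma NoDup_nth_inj (l : list V) d i j : NoDup l -> i < length l -> j < length l ->
  nth i l d = nth j l d -> i = j.
Proof. intros Hl. exact (proj1 (NoDup_nth l d) Hl i j). Qed.

Lemma last_nth (p : list V) d : last p d = nth (pred (length p)) p d.
Proof.
  induction p as [|a p IH]; simpl; auto.
  destruct p as [|b p]; simpl; auto.
Qed.

Lemma last_indep (l : list V) d d' : l <> [] -> last l d = last l d'.
Proof. intros. rewrite !last_nth. apply nth_indep. destruct l; [congruence|simpl; lia]. Qed.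

Lemma last_cons_app (p1 p2 : list V) x d d' : last (x :: p2) d = last (p1 ++ x :: p2) d'.
Proof.
  induction p1 as [|a p1 IH]; [apply last_indep; discriminate|].
  rewrite IH. simpl. destruct (p1 ++ x :: p2) eqn:E; [destruct p1; discriminate|].
  apply last_indep. discriminate.
Qed.

Lemma walk_nth (H : digraph V) (p : list V) d :
  walk H p <-> forall i, S i < length p -> H (nth i p d) (nth (S i) p d).
Proof.
  induction p as [|a p IH]; simpl.
  - split; [intros _ i Hi; lia | auto].
  - destruct p as [|b p].
    + split; [intros _ i Hi; simpl in Hi; lia | auto].
    + split.
      * intros [Hab Hw] [|i] Hi; [exact Hab|].
        apply (proj1 IH Hw). simpl in *; lia.
      * intros Hn. split.
        -- apply (Hn 0). simpl; lia.
        -- apply IH. intros i Hi. apply (Hn (S i)). simpl in *; lia.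
Qed.

Lemma is_path_nth (H : digraph V) x y p d :
  is_path H x y p <-> (p <> [] /\ NoDup p /\
    (forall i, S i < length p -> H (nth i p d) (nth (S i) p d)) /\
    nth 0 p d = x /\ nth (pred (length p)) p d = y).
Proof.
  unfold is_path. rewrite (walk_nth H p d).
  destruct p as [|a p].
  - split; [intros (_ & _ & Hh & _); discriminate | intros (Hn & _); congruence].
  - rewrite last_nth, (nth_indep _ x d) by (simpl; lia). simpl (hd_error _). simpl (nth 0 _ _).
    split.
    + intros (Hnd & Hw & Hh & Hl). injection Hh as ->. repeat split; auto; congruence.
    + intros (_ & Hnd & Hw & -> & Hl). repeat split; auto.
Qed.

Lemma walk_subrel (H H' : digraph V) p :
  (forall a b, H a b -> H' a b) -> walk H p -> walk H' p.
Proof.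
  intros Hs. induction p as [|a p IH]; simpl; auto.
  destruct p as [|b p]; auto. intros [Hab Hw]; split; auto.
Qed.

Lemma is_path_subrel (H H' : digraph V) x y p :
  (forall a b, H a b -> H' a b) -> is_path H x y p -> is_path H' x y p.
Proof. intros Hs (Hnd & Hw & Hh & Hl). repeat split; auto. eapply walk_subrel; eauto. Qed.

Lemma walk_app_r (H : digraph V) l1 l2 : walk H (l1 ++ l2) -> walk H l2.
Proof.
  induction l1 as [|a l1 IH]; simpl; auto.
  intros Hw. apply IH. destruct (l1 ++ l2); auto. destruct Hw; auto.
Qed.

Lemma walk_contains_path (H : digraph V) (y : V) : forall l x,
  walk H (x :: l) -> last (x :: l) y = y ->
  exists p, is_path H x y p /\ incl p (x :: l).
Proof.
  induction l as [|b l IH]; intros x Hw Hl.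
  - simpl in Hl. subst y. exists [x]. split; [|apply incl_refl].
    repeat split; simpl; auto. repeat constructor. auto.
  - destruct Hw as [Hxb Hw].
    destruct (IH b Hw Hl) as [p [(Hnd & Hpw & Hh & Hpl) Hinc]].
    destruct (classic (In x p)) as [Hin | Hnin].
    + (* cut the loop through x *)
      apply in_split in Hin. destruct Hin as [p1 [p2 ->]].
      exists (x :: p2). split.
      * refine (conj _ (conj _ (conj _ _))).
        -- exact (NoDup_app_remove_l _ _ Hnd).
        -- exact (walk_app_r _ _ _ Hpw).
        -- reflexivity.
        -- rewrite <- Hpl. apply last_cons_app.
      * intros z Hz. right. apply Hinc, in_or_app. right. exact Hz.
    + exists (x :: p). split.
      * destruct p as [|c p]; [discriminate|]. injection Hh as ->.
        refine (conj _ (conj _ (conj _ _))).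
        -- constructor; auto.
        -- simpl. split; auto.
        -- reflexivity.
        -- rewrite <- Hpl. symmetry. apply (last_cons_app [x] p b).
      * intros z [Hz|Hz]; [left; auto | right; apply Hinc; auto].
Qed.

Lemma walk_nth_contains_path (H : digraph V) l x y d : walk H l -> l <> [] ->
  nth 0 l d = x -> nth (pred (length l)) l d = y ->
  exists p, is_path H x y p /\ incl p l.
Proof.
  intros Hw Hne H0 Hl. destruct l as [|a l]; [congruence|]. simpl in H0. subst a.
  apply walk_contains_path; auto. rewrite last_nth, <- Hl. apply nth_indep. simpl; lia.
Qed.

Lemma term_edge_nth (p : list V) e d :
  term_edge p e <->
  (2 <= length p /\ nth (length p - 2) p d = fst e /\ nth (length p - 1) p d = snd e).
Proof.
  split.
  - intros [pre ->]. rewrite length_app. simpl.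
    rewrite !app_nth2 by lia.
    replace (length pre + 2 - 2 - length pre) with 0 by lia.
    replace (length pre + 2 - 1 - length pre) with 1 by lia. simpl. repeat split; auto; lia.
  - intros (Hl & E1 & E2). exists (firstn (length p - 2) p).
    rewrite <- (firstn_skipn (length p - 2) p) at 1. f_equal.
    assert (Hs : length (skipn (length p - 2) p) = 2) by (rewrite length_skipn; lia).
    pose proof (nth_skipn (length p - 2) p 0 d) as N0.
    pose proof (nth_skipn (length p - 2) p 1 d) as N1.
    destruct (skipn (length p - 2) p) as [|a [|b [|c l]]]; simpl in Hs; try lia.
    simpl in N0, N1. rewrite N0, N1, Nat.add_0_r, E1.
    replace (length p - 2 + 1) with (length p - 1) by lia. rewrite E2. reflexivity.
Qed.

Lemma term_edge_pair (x y : V) e : term_edge [x; y] e -> e = (x, y).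
Proof.
  intros Hte. apply (term_edge_nth _ _ x) in Hte. destruct e as [a b].
  simpl in Hte. destruct Hte as (_ & -> & ->). reflexivity.
Qed.

Lemma term_edge_skipn (p : list V) k e : S k < length p -> term_edge p e -> term_edge (skipn k p) e.
Proof.
  intros Hk Hte. apply (term_edge_nth _ _ (fst e)) in Hte. destruct Hte as (Hl & E1 & E2).
  apply (term_edge_nth _ _ (fst e)). rewrite length_skipn, !nth_skipn.
  replace (k + (length p - k - 2)) with (length p - 2) by lia.
  replace (k + (length p - k - 1)) with (length p - 1) by lia. split; auto; lia.
Qed.

Definition splice (a : list V) k (b : list V) j := firstn (S k) a ++ skipn (S j) b.

Section Splice.
Variables (a b : list V) (k j : nat).
Hypothesis (Hk : k < length a) (Hj : j < length b).

Lemma splice_length : length (splice a k b j) = S k + (length b - S j).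
Proof. unfold splice. rewrite length_app, firstn_length_le, length_skipn; lia. Qed.

Lemma splice_nth_l i d : i <= k -> nth i (splice a k b j) d = nth i a d.
Proof.
  intros Hi. unfold splice. rewrite app_nth1 by (rewrite firstn_length_le; lia).
  rewrite nth_firstn. destruct (Nat.ltb_spec i (S k)); auto; lia.
Qed.

Lemma splice_nth_r i d : k < i -> nth i (splice a k b j) d = nth (S j + (i - S k)) b d.
Proof.
  intros Hi. unfold splice. rewrite app_nth2 by (rewrite firstn_length_le; lia).
  rewrite nth_skipn, firstn_length_le by lia. reflexivity.
Qed.

Lemma splice_In w d : In w (splice a k b j) ->
  (exists i, i <= k /\ nth i a d = w) \/ (exists i, j < i /\ i < length b /\ nth i b d = w).
Proof.
  intros Hin. apply (In_nth_iff _ _ d) in Hin. destruct Hin as [i [Hi Ei]].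
  rewrite splice_length in Hi.
  destruct (Nat.le_gt_cases i k).
  - left. exists i. rewrite splice_nth_l in Ei; auto.
  - right. exists (S j + (i - S k)). rewrite splice_nth_r in Ei; auto. repeat split; auto; lia.
Qed.

Lemma splice_In_l i d : i <= k -> In (nth i a d) (splice a k b j).
Proof.
  intros Hi. rewrite <- (splice_nth_l i d Hi). apply nth_In.
  rewrite splice_length. lia.
Qed.

Section Join.
Variable d : V.
Hypothesis Hjoin : nth k a d = nth j b d.

Lemma splice_walk (H : digraph V) : walk H a -> walk H b -> walk H (splice a k b j).
Proof.
  rewrite !(walk_nth _ _ d). intros Ha Hb i Hi. rewrite splice_length in Hi.
  destruct (Nat.lt_ge_cases i k).
  - rewrite !splice_nth_l by lia. apply Ha; lia.
  - destruct (Nat.eq_dec i k) as [->|Hne].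
    + rewrite splice_nth_l, splice_nth_r, Hjoin by lia.
      replace (S j + (S k - S k)) with (S j) by lia. apply Hb. lia.
    + rewrite !splice_nth_r by lia.
      replace (S j + (S i - S k)) with (S (S j + (i - S k))) by lia. apply Hb. lia.
Qed.

Lemma splice_last :
  nth (pred (length (splice a k b j))) (splice a k b j) d = nth (pred (length b)) b d.
Proof.
  rewrite splice_length. destruct (Nat.eq_dec (S j) (length b)).
  - replace (pred (S k + (length b - S j))) with k by lia.
    rewrite splice_nth_l, Hjoin by lia. f_equal. lia.
  - rewrite splice_nth_r by lia. f_equal. lia.
Qed.

End Join.

Lemma splice_NoDup d : NoDup a -> NoDup b ->
  (forall i i', i <= k -> j < i' -> i' < length b -> nth i a d <> nth i' b d) ->
  NoDup (splice a k b j).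
Proof.
  intros Na Nb Hd. apply (NoDup_nth _ d). rewrite splice_length.
  intros i i' Hi Hi' E.
  destruct (Nat.le_gt_cases i k); destruct (Nat.le_gt_cases i' k).
  - rewrite !splice_nth_l in E by auto. apply (NoDup_nth_inj a d); auto; lia.
  - rewrite splice_nth_l, splice_nth_r in E by auto.
    exfalso. apply (Hd i (S j + (i' - S k))); auto; lia.
  - rewrite splice_nth_r, splice_nth_l in E by auto.
    exfalso. apply (Hd i' (S j + (i - S k))); auto; lia.
  - rewrite !splice_nth_r in E by auto.
    enough (S j + (i - S k) = S j + (i' - S k)) by lia.
    apply (NoDup_nth_inj b d); auto; lia.
Qed.

End Splice.
End Paths.

Fixpoint last_index (P : nat -> Prop) (n : nat) : nat :=
  match n with
  | 0 => 0
  | S m => if excluded_middle_informative (P m) then m else last_index P m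
  end.

Lemma last_index_spec (P : nat -> Prop) n k : P k -> k < n ->
  P (last_index P n) /\ k <= last_index P n /\ last_index P n < n /\
  (forall j, last_index P n < j -> j < n -> ~ P j).
Proof.
  induction n as [|n IH]; intros Hk Hkn; [lia|]. simpl.
  destruct (excluded_middle_informative (P n)) as [Hp|Hp].
  - repeat split; auto; lia.
  - assert (Hkn' : k < n) by (destruct (Nat.eq_dec k n); [subst; contradiction | lia]).
    destruct (IH Hk Hkn') as (A & B & C & E). repeat split; auto; try lia.
    intros j Hj Hjn. destruct (Nat.eq_dec j n); subst; auto. apply E; lia.
Qed.

Lemma last_index_le (P : nat -> Prop) n : last_index P n <= pred n.
Proof.
  induction n as [|n IH]; simpl; auto.
  destruct (excluded_middle_informative (P n)); lia.
Qed.

Lemma last_index_mono (P P' : nat -> Prop) n :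
  (forall k, P k -> P' k) -> last_index P n <= last_index P' n.
Proof.
  intros Hs. induction n as [|n IH]; simpl; auto.
  destruct (excluded_middle_informative (P n)) as [Hp|Hp];
  destruct (excluded_middle_informative (P' n)) as [Hp'|Hp']; auto.
  - exfalso; auto.
  - pose proof (last_index_le P n). lia.
Qed.

Fixpoint first_index (P : nat -> Prop) (n : nat) (dflt : nat) : nat :=
  match n with
  | 0 => dflt
  | S m => if excluded_middle_informative (P m) then first_index P m m else first_index P m dflt
  end.

Lemma first_index_spec (P : nat -> Prop) n dflt :
  ((exists k, k < n /\ P k) -> P (first_index P n dflt) /\ first_index P n dflt < n /\
     forall j, j < first_index P n dflt -> ~ P j) /\
  (~ (exists k, k < n /\ P k) -> first_index P n dflt = dflt).
Proof.
  revert dflt. induction n as [|n IH]; intros dflt; simpl.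
  - split; [intros [k [Hk _]]; lia | auto].
  - destruct (excluded_middle_informative (P n)) as [Hp|Hp].
    + split; [|intros Hn; exfalso; apply Hn; exists n; split; auto].
      intros _. destruct (classic (exists k, k < n /\ P k)) as [He|He].
      * destruct (proj1 (IH n) He) as (A & B & C). repeat split; auto; lia.
      * rewrite (proj2 (IH n) He). repeat split; auto.
        intros j Hj Pj. apply He. exists j; auto.
    + split.
      * intros [k [Hk Pk]].
        assert (Hkn : k < n) by (destruct (Nat.eq_dec k n); [subst; contradiction | lia]).
        destruct (proj1 (IH dflt) (ex_intro _ k (conj Hkn Pk))) as (A & B & C).
        repeat split; auto; lia.
      * intros Hn. apply (proj2 (IH dflt)). intros [k [Hk Pk]]. apply Hn. exists k; split; auto.
Qed.

Lemma range_has_min (f : nat -> nat) : exists m, (exists n, f n = m) /\ forall n, m <= f n.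
Proof.
  destruct (dec_inh_nat_subset_has_unique_least_element (fun m => exists n, f n = m))
    as [m [[[n Hn] Hmin] _]].
  - intros m. apply classic.
  - exists (f 0), 0. reflexivity.
  - exists m. split; [exists n; exact Hn | intros k; apply Hmin; exists k; reflexivity].
Qed.

Definition range_min (f : nat -> nat) : nat :=
  proj1_sig (constructive_indefinite_description _ (range_has_min f)).

Lemma nonincreasing_eventually_range_min (f : nat -> nat) : (forall n, f (S n) <= f n) ->
  exists N, forall n, N <= n -> f n = range_min f.
Proof.
  intros Hdec. unfold range_min.
  destruct (constructive_indefinite_description _ _) as [m [[N HN] Hmin]]. simpl.
  exists N. intros n Hn.
  assert (f n <= f N) by (induction Hn as [|n Hn IH]; [lia | specialize (Hdec n); lia]).
  specialize (Hmin n). lia.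
Qed.

Section Rerouting.
Variable V : Type.
Variables D L : digraph V.
Variables r v : V.
Hypothesis v_neq_r : v <> r.
Hypothesis L_sub_D : subdigraph L D.
Variable Q : list V -> Prop.
Variable Sep : V -> Prop.
Hypothesis Q_system : path_system (del_edge D r v) r v Q.
Hypothesis Q_in_L : forall p, Q p -> walk L p.
Hypothesis Sep_separation : separation (del_edge D r v) r v Sep.
Hypothesis Q_orth_Sep : orthogonal Q Sep.
Variable PI : list V -> Prop.
Hypothesis PI_system : path_system L r v PI.

Lemma del_edge_L_D a b : del_edge L r v a b -> del_edge D r v a b.
Proof. intros [Hab Hne]. split; auto. Qed.

Lemma Sep_not_ends w : Sep w -> w <> r /\ w <> v.
Proof. destruct Sep_separation as (_ & _ & Hends & _). apply Hends. Qed.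

Lemma Sep_meets_path p : is_path (del_edge D r v) r v p -> exists w, In w p /\ Sep w.
Proof. destruct Sep_separation as (_ & _ & _ & Hmeet). apply Hmeet. Qed.

Definition sep_index (l : list V) : nat := last_index (fun k => Sep (nth k l v)) (length l).

Lemma sep_index_inner l : nth 0 l v = r -> nth (pred (length l)) l v = v ->
  Sep (nth (sep_index l) l v) -> 0 < sep_index l /\ sep_index l < pred (length l).
Proof.
  intros H0 Hl Hs. pose proof (last_index_le (fun k => Sep (nth k l v)) (length l)).
  fold (sep_index l) in H.
  split.
  - destruct (sep_index l) eqn:E; [|lia]. rewrite H0 in Hs. apply Sep_not_ends in Hs. tauto.
  - destruct (Nat.eq_dec (sep_index l) (pred (length l))) as [E|]; [|lia].
    rewrite E, Hl in Hs. apply Sep_not_ends in Hs. tauto.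
Qed.

Lemma Q_path_facts q : Q q ->
  NoDup q /\ 2 <= length q /\ nth 0 q v = r /\ nth (pred (length q)) q v = v /\
  (forall i, S i < length q -> del_edge L r v (nth i q v) (nth (S i) q v)).
Proof.
  intros Hq. pose proof (proj1 Q_system q Hq) as Hp.
  apply (is_path_nth _ _ _ _ v) in Hp. destruct Hp as (Hne & Hnd & Hw & H0 & Hl).
  pose proof (Q_in_L q Hq) as HwL. rewrite (walk_nth _ _ v) in HwL.
  refine (conj Hnd (conj _ (conj H0 (conj Hl _)))).
  - destruct q as [|a [|b q]]; [congruence| |simpl; lia]. simpl in *. congruence.
  - intros i Hi. split; [apply HwL; auto | apply (Hw i Hi)].
Qed.

Lemma Q_walk q : Q q -> walk (del_edge L r v) q.
Proof. intros Hq. apply (walk_nth _ _ v). apply (Q_path_facts q Hq). Qed.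

Lemma Q_path q : Q q -> is_path (del_edge L r v) r v q.
Proof.
  intros Hq. destruct (proj1 Q_system q Hq) as (Hnd & _ & Hh & Hl).
  repeat split; auto. apply Q_walk; auto.
Qed.

Lemma Q_sep_index q : Q q ->
  sep_index q < length q /\ Sep (nth (sep_index q) q v) /\
  (forall k, k < length q -> Sep (nth k q v) -> k = sep_index q) /\
  0 < sep_index q /\ sep_index q < pred (length q).
Proof.
  intros Hq. destruct (Q_path_facts q Hq) as (Hnd & _ & H0 & Hl & _).
  destruct (proj1 Q_orth_Sep q Hq) as [w [[Hw Sw] Hu]].
  apply (In_nth_iff _ _ v) in Hw. destruct Hw as [i [Hi <-]].
  destruct (last_index_spec (fun k => Sep (nth k q v)) (length q) i Sw Hi) as (A & _ & C & _).
  fold (sep_index q) in A, C.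
  assert (U : forall k, k < length q -> Sep (nth k q v) -> k = sep_index q).
  { intros k Hk Sk. apply (NoDup_nth_inj q v); auto.
    rewrite <- (Hu _ (conj (nth_In _ _ Hk) Sk)). apply Hu. split; auto. apply nth_In; auto. }
  repeat split; auto; apply sep_index_inner; auto.
Qed.

Lemma Q_unique_through q1 q2 w : Q q1 -> Q q2 -> In w q1 -> In w q2 -> w <> r -> w <> v ->
  q1 = q2.
Proof.
  intros H1 H2 I1 I2 Nr Nv. destruct (classic (q1 = q2)) as [E|Ne]; auto.
  destruct ((proj2 Q_system) q1 q2 H1 H2 Ne w I1 I2); contradiction.
Qed.

Lemma PI_path_facts p : PI p -> p <> [r; v] ->
  NoDup p /\ 3 <= length p /\ nth 0 p v = r /\ nth (pred (length p)) p v = v /\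
  (forall i, S i < length p -> L (nth i p v) (nth (S i) p v)) /\
  (forall i, i < length p -> nth i p v = r -> i = 0).
Proof.
  intros Hp Hne. pose proof (proj1 PI_system p Hp) as Hpp.
  apply (is_path_nth _ _ _ _ v) in Hpp. destruct Hpp as (Hn & Hnd & Hw & H0 & Hl).
  assert (Hr : forall i, i < length p -> nth i p v = r -> i = 0).
  { intros i Hi E. apply (NoDup_nth_inj p v); auto. destruct p; [congruence|simpl; lia]. congruence. }
  refine (conj Hnd (conj _ (conj H0 (conj Hl (conj Hw Hr))))).
  destruct p as [|a [|b [|c p]]]; simpl in *; try lia; congruence.
Qed.

(* Only the path [r; v] can use the edge rv. *)
Lemma PI_path_del_edge p : PI p -> p <> [r; v] -> is_path (del_edge D r v) r v p.
Proof.
  intros Hp Hne. destruct (PI_path_facts p Hp Hne) as (Hnd & Hlen & H0 & Hl & Hw & Hr).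
  apply (is_path_nth _ _ _ _ v). refine (conj _ (conj Hnd (conj _ (conj H0 Hl)))).
  - destruct p; simpl in *; [lia|congruence].
  - intros i Hi. split; [apply L_sub_D, Hw; auto|].
    intros [E1 E2]. apply Hr in E1; [subst i|lia].
    assert (pred (length p) = 1) by (apply (NoDup_nth_inj p v); auto; lia || congruence).
    lia.
Qed.

Lemma PI_sep_index p : PI p -> p <> [r; v] ->
  sep_index p < length p /\ Sep (nth (sep_index p) p v) /\
  (forall k, sep_index p < k -> k < length p -> ~ Sep (nth k p v)) /\
  0 < sep_index p /\ sep_index p < pred (length p).
Proof.
  intros Hp Hne. destruct (PI_path_facts p Hp Hne) as (_ & _ & H0 & Hl & _).
  destruct (Sep_meets_path p (PI_path_del_edge p Hp Hne)) as [w [Hw Sw]].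
  apply (In_nth_iff _ _ v) in Hw. destruct Hw as [i [Hi <-]].
  destruct (last_index_spec (fun k => Sep (nth k p v)) (length p) i Sw Hi) as (A & _ & C & E).
  fold (sep_index p) in A, C, E.
  repeat split; auto; apply sep_index_inner; auto.
Qed.

Definition is_tail (t : list V) : Prop :=
  exists p, PI p /\ p <> [r; v] /\ t = skipn (sep_index p) p.

Lemma tail_facts t : is_tail t ->
  NoDup t /\ 2 <= length t /\ nth (pred (length t)) t v = v /\
  (forall i, S i < length t -> L (nth i t v) (nth (S i) t v)) /\
  ~ In r t /\ Sep (nth 0 t v) /\
  (forall k, 0 < k -> k < length t -> ~ Sep (nth k t v)).
Proof.
  intros [p [Hp [Hne ->]]].
  destruct (PI_path_facts p Hp Hne) as (Hnd & Hlen & H0 & Hl & Hw & Hr).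
  destruct (PI_sep_index p Hp Hne) as (A & B & C & E & F).
  rewrite length_skipn.
  refine (conj _ (conj _ (conj _ (conj _ (conj _ (conj _ _)))))).
  - apply (NoDup_nth _ v). rewrite length_skipn. intros i j Hi Hj. rewrite !nth_skipn.
    intros Eq. apply (NoDup_nth_inj p v) in Eq; auto; lia.
  - lia.
  - rewrite nth_skipn.
    replace (sep_index p + pred (length p - sep_index p)) with (pred (length p)) by lia. exact Hl.
  - intros i Hi. rewrite !nth_skipn.
    replace (sep_index p + S i) with (S (sep_index p + i)) by lia. apply Hw. lia.
  - intros Hin. apply (In_nth_iff _ _ v) in Hin. destruct Hin as [i [Hi Ei]].
    rewrite length_skipn in Hi. rewrite nth_skipn in Ei. apply Hr in Ei; lia.
  - rewrite nth_skipn, Nat.add_0_r. auto.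
  - intros k Hk Hk2. rewrite nth_skipn. apply C; lia.
Qed.

Lemma tail_walk t : is_tail t -> walk (del_edge L r v) t.
Proof.
  intros Ht. destruct (tail_facts t Ht) as (_ & _ & _ & E & Nr & _).
  apply (walk_nth _ _ v). intros i Hi.
  split; auto. intros [E1 _]. apply Nr. rewrite <- E1. apply nth_In. lia.
Qed.

Lemma tail_unique_through t1 t2 w : is_tail t1 -> is_tail t2 -> In w t1 -> In w t2 -> w <> v ->
  t1 = t2.
Proof.
  intros T1 T2 I1 I2 Nv.
  destruct (classic (t1 = t2)) as [E|Ne]; auto.
  destruct (tail_facts t1 T1) as (_ & _ & _ & _ & Nr & _).
  destruct T1 as [p1 [Hp1 [_ E1]]], T2 as [p2 [Hp2 [_ E2]]].
  destruct (classic (p1 = p2)) as [<-|Nep]; [congruence|].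
  assert (In w p1) by (rewrite <- (firstn_skipn (sep_index p1) p1); apply in_or_app; right; congruence).
  assert (In w p2) by (rewrite <- (firstn_skipn (sep_index p2) p2); apply in_or_app; right; congruence).
  destruct ((proj2 PI_system) p1 p2 Hp1 Hp2 Nep w) as [<-|]; auto; contradiction.
Qed.

(* Otherwise following q up to q_k and then t would give an r-v path in D - rv avoiding Sep. *)
Lemma tail_misses_Q_before_sep t q k : is_tail t -> Q q -> k < sep_index q ->
  ~ In (nth k q v) t.
Proof.
  intros Ht Hq Hk Hin.
  destruct (tail_facts t Ht) as (_ & _ & Lastt & _ & _ & _ & Sk).
  destruct (Q_sep_index q Hq) as (Hs & _ & U & _ & _).
  apply (In_nth_iff _ _ v) in Hin. destruct Hin as [j [Hj Ej]].
  assert (Hk' : k < length q) by lia.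
  assert (Hw : walk (del_edge L r v) (splice q k t j)).
  { apply (splice_walk _ _ _ _ Hk' Hj v); auto using Q_walk, tail_walk. }
  destruct (walk_nth_contains_path _ _ r v v Hw) as [p [Hp Hinc]].
  - intros E. pose proof (splice_length q t k j Hk' Hj) as HL. rewrite E in HL. simpl in HL. lia.
  - rewrite splice_nth_l by lia. apply (Q_path_facts q Hq).
  - rewrite splice_last; auto.
  - apply (is_path_subrel _ _ _ _ _ del_edge_L_D), Sep_meets_path in Hp.
    destruct Hp as [w [Hwp Sw]]. apply Hinc in Hwp.
    destruct (splice_In q t k j Hk' Hj w v Hwp) as [[i [Hi <-]] | [i [Hi1 [Hi2 <-]]]].
    + apply U in Sw; lia.
    + apply (Sk i); auto; lia.
Qed.

Lemma Q_nth_neq_v q m : Q q -> m < pred (length q) -> nth m q v <> v.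
Proof.
  intros Hq Hm E. destruct (Q_path_facts q Hq) as (Hnd & _ & _ & Hl & _).
  enough (m = pred (length q)) by lia.
  apply (NoDup_nth_inj q v); auto; lia || congruence.
Qed.

(* The crossing points are found by a decreasing iteration. Start with x_0(q) = the last index
   of q. Let y_n(t) be the last inner index of t at which t meets some q at or before x_n(q),
   and let x_(n+1)(q) be the first index at or before x_n(q) at which q passes through some
   such vertex t_(y_n(t)) (or x_n(q) if there is none). Both sequences decrease, so they
   stabilise at xlim and ylim. *)
Definition meets_below (xs : list V -> nat) (t : list V) (k : nat) : Prop :=
  S k < length t /\ exists q m, Q q /\ m <= xs q /\ nth m q v = nth k t v.

Definition ycut (xs : list V -> nat) (t : list V) : nat := last_index (meets_below xs t) (length t).

Definition is_ycut_vertex (xs : list V -> nat) (w : V) : Prop :=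
  exists t, is_tail t /\ meets_below xs t (ycut xs t) /\ nth (ycut xs t) t v = w.

Definition xcut_step (xs : list V -> nat) (q : list V) : nat :=
  first_index (fun k => is_ycut_vertex xs (nth k q v)) (S (xs q)) (xs q).

Fixpoint xcut (n : nat) : list V -> nat :=
  match n with
  | 0 => fun q => pred (length q)
  | S n => xcut_step (xcut n)
  end.

Lemma xcut_step_le xs q : xcut_step xs q <= xs q.
Proof.
  unfold xcut_step.
  destruct (first_index_spec (fun k => is_ycut_vertex xs (nth k q v)) (S (xs q)) (xs q))
    as [Hex Hnone].
  destruct (classic (exists k, k < S (xs q) /\ is_ycut_vertex xs (nth k q v))) as [He|He].
  - destruct (Hex He) as (_ & Hlt & _). lia.
  - rewrite (Hnone He). lia.
Qed.

Lemma xcut_step_le_ycut_vertex xs q m : m <= xs q -> is_ycut_vertex xs (nth m q v) ->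
  xcut_step xs q <= m.
Proof.
  intros Hm Hy. unfold xcut_step.
  destruct (first_index_spec (fun k => is_ycut_vertex xs (nth k q v)) (S (xs q)) (xs q))
    as [Hex _].
  destruct (Hex (ex_intro _ m (conj (le_n_S _ _ Hm) Hy))) as (_ & _ & Hmin).
  destruct (Nat.lt_ge_cases m (first_index (fun k => is_ycut_vertex xs (nth k q v)) (S (xs q)) (xs q)))
    as [Hlt|]; [exfalso; exact (Hmin m Hlt Hy) | lia].
Qed.

Lemma xcut_nonincreasing n q : xcut (S n) q <= xcut n q.
Proof. apply xcut_step_le. Qed.

Lemma xcut_le_last n q : xcut n q <= pred (length q).
Proof. induction n; simpl; auto. pose proof (xcut_step_le (xcut n) q). lia. Qed.

Lemma xcut_lt_length n q : Q q -> xcut n q < length q.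
Proof. intros Hq. pose proof (xcut_le_last n q). destruct (Q_path_facts q Hq) as (_ & ? & _). lia. Qed.

Lemma ycut_mono xs xs' t : (forall q, xs' q <= xs q) -> ycut xs' t <= ycut xs t.
Proof.
  intros Hle. apply last_index_mono. intros k [Hk [q [m (Hq & Hm & E)]]].
  split; auto. exists q, m. repeat split; auto. specialize (Hle q). lia.
Qed.

Lemma ycut_nonincreasing n t : ycut (xcut (S n)) t <= ycut (xcut n) t.
Proof. apply ycut_mono. intros. apply xcut_nonincreasing. Qed.

Lemma xcut_last_or_ycut n q : Q q ->
  xcut n q = pred (length q) \/ is_ycut_vertex (xcut n) (nth (xcut n q) q v).
Proof.
  intros Hq. induction n as [|n IH]; [left; reflexivity|].
  simpl. set (xs := xcut n) in *.
  destruct (first_index_spec (fun k => is_ycut_vertex xs (nth k q v)) (S (xs q)) (xs q))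
    as [Hex Hnone].
  destruct (classic (exists k, k < S (xs q) /\ is_ycut_vertex xs (nth k q v))) as [He|He].
  - right. destruct (Hex He) as (Hy & _ & _). fold (xcut_step xs q) in Hy.
    destruct Hy as [t [Ht [Hmb Et]]]. exists t.
    assert (Hmb' : meets_below (xcut_step xs) t (ycut xs t)).
    { destruct Hmb as [Hl _]. split; auto. exists q, (xcut_step xs q). repeat split; auto. }
    assert (Eq : ycut (xcut_step xs) t = ycut xs t).
    { apply Nat.le_antisymm.
      - apply ycut_mono. intros; apply xcut_step_le.
      - destruct (last_index_spec _ (length t) _ Hmb') as (_ & Hle & _); [destruct Hmb'; lia|].
        exact Hle. }
    rewrite Eq. auto.
  - unfold xcut_step. rewrite (Hnone He). destruct IH as [IH|IH]; [left; auto|].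
    exfalso. apply He. exists (xs q). split; auto.
Qed.

Lemma xcut_ge_sep n q : Q q -> sep_index q <= xcut n q.
Proof.
  intros Hq. destruct (xcut_last_or_ycut n q Hq) as [E|[t [Ht [[Hl _] Et]]]].
  - destruct (Q_sep_index q Hq) as (_ & _ & _ & _ & ?). lia.
  - destruct (Nat.le_gt_cases (sep_index q) (xcut n q)) as [|Hlt]; auto.
    exfalso. apply (tail_misses_Q_before_sep t q (xcut n q) Ht Hq Hlt).
    rewrite <- Et. apply nth_In. lia.
Qed.

Lemma meets_below_ycut n t : is_tail t ->
  meets_below (xcut n) t (ycut (xcut n) t) /\ S (ycut (xcut n) t) < length t.
Proof.
  intros Ht. destruct (tail_facts t Ht) as (_ & Lt & _ & _ & _ & S0 & _).
  destruct (proj2 Q_orth_Sep _ S0) as [q [Hq Hin]].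
  apply (In_nth_iff _ _ v) in Hin. destruct Hin as [i [Hi Ei]].
  destruct (Q_sep_index q Hq) as (_ & _ & U & _ & _).
  assert (i = sep_index q) as -> by (apply U; auto; congruence).
  assert (Hmb0 : meets_below (xcut n) t 0).
  { split; [lia|]. exists q, (sep_index q). repeat split; auto. apply xcut_ge_sep; auto. }
  destruct (last_index_spec _ (length t) 0 Hmb0) as (Hmb & _); [lia|].
  split; auto. apply Hmb.
Qed.

Definition xlim (q : list V) : nat := range_min (fun n => xcut n q).
Definition ylim (t : list V) : nat := range_min (fun n => ycut (xcut n) t).

Lemma xcut_eventually q : exists N, forall n, N <= n -> xcut n q = xlim q.
Proof. apply nonincreasing_eventually_range_min. intros; apply xcut_nonincreasing. Qed.

Lemma ycut_eventually t : exists N, forall n, N <= n -> ycut (xcut n) t = ylim t.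
Proof. apply nonincreasing_eventually_range_min. intros; apply ycut_nonincreasing. Qed.

Lemma xlim_le_last q : xlim q <= pred (length q).
Proof. destruct (xcut_eventually q) as [N HN]. rewrite <- (HN N) by lia. apply xcut_le_last. Qed.

Lemma xlim_ge_sep q : Q q -> sep_index q <= xlim q.
Proof.
  intros Hq. destruct (xcut_eventually q) as [N HN]. rewrite <- (HN N) by lia.
  apply xcut_ge_sep; auto.
Qed.

Lemma ylim_lt t : is_tail t -> S (ylim t) < length t.
Proof.
  intros Ht. destruct (ycut_eventually t) as [N HN]. rewrite <- (HN N) by lia.
  apply meets_below_ycut; auto.
Qed.

Lemma ylim_inner t : is_tail t -> nth (ylim t) t v <> v /\ nth (ylim t) t v <> r.
Proof.
  intros Ht. pose proof (ylim_lt t Ht).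
  destruct (tail_facts t Ht) as (Nt & _ & Lastt & _ & Nr & _). split.
  - intros E. enough (ylim t = pred (length t)) by lia.
    apply (NoDup_nth_inj t v); auto; lia || congruence.
  - intros E. apply Nr. rewrite <- E. apply nth_In. lia.
Qed.

Lemma tail_beyond_ylim_misses_Q t q k m : is_tail t -> ylim t < k -> S k < length t ->
  Q q -> m <= xlim q -> nth m q v <> nth k t v.
Proof.
  intros Ht Hk Hk2 Hq Hm E.
  destruct (ycut_eventually t) as [N1 H1]. destruct (xcut_eventually q) as [N2 H2].
  assert (Hmb : meets_below (xcut (N1 + N2)) t k).
  { split; auto. exists q, m. repeat split; auto. rewrite H2; lia. }
  destruct (last_index_spec _ (length t) k Hmb) as (_ & Hle & _); [lia|].
  fold (ycut (xcut (N1 + N2)) t) in Hle. rewrite H1 in Hle by lia. lia.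
Qed.

Lemma tail_ylim_on_Q t : is_tail t -> exists q N, Q q /\ forall n, N <= n ->
  is_ycut_vertex (xcut n) (nth (ylim t) t v) /\
  exists m, m <= xcut n q /\ nth m q v = nth (ylim t) t v.
Proof.
  intros Ht. destruct (ycut_eventually t) as [N HN].
  destruct (meets_below_ycut N t Ht) as [[_ [q [m (Hq & Hm & Em)]]] _].
  exists q, N. split; auto. intros n Hn.
  destruct (meets_below_ycut n t Ht) as [Hmb _].
  split; [exists t; rewrite <- (HN n Hn); auto|].
  destruct Hmb as [_ [q' [m' (Hq' & Hm' & Em')]]].
  rewrite HN in Em, Em' by lia.
  destruct (ylim_inner t Ht) as [Nv Nr].
  assert (q' = q) as ->.
  { apply (Q_unique_through q' q (nth (ylim t) t v)); auto.
    - rewrite <- Em'. apply nth_In. pose proof (xcut_lt_length n q' Hq'). lia.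
    - rewrite <- Em. apply nth_In. pose proof (xcut_lt_length N q Hq). lia. }
  exists m'. auto.
Qed.

Definition matched (q t : list V) : Prop :=
  Q q /\ is_tail t /\ xlim q < pred (length q) /\ nth (xlim q) q v = nth (ylim t) t v.

Lemma tail_matched t : is_tail t -> exists q, matched q t.
Proof.
  intros Ht. destruct (tail_ylim_on_Q t Ht) as [q [N1 [Hq Hon]]].
  destruct (xcut_eventually q) as [N2 HN2].
  destruct (Hon (N1 + N2)) as [Hy [m [Hm Em]]]; [lia|].
  rewrite <- Em in Hy.
  pose proof (xcut_step_le_ycut_vertex _ _ _ Hm Hy) as Hstep.
  change (xcut_step (xcut (N1 + N2)) q) with (xcut (S (N1 + N2)) q) in Hstep.
  rewrite HN2 in Hm, Hstep by lia.
  assert (m = xlim q) as -> by lia.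
  exists q. repeat split; auto.
  pose proof (xlim_le_last q). destruct (Nat.eq_dec (xlim q) (pred (length q))) as [E|]; [|lia].
  exfalso. apply (proj1 (ylim_inner t Ht)). rewrite <- Em, E. apply (Q_path_facts q Hq).
Qed.

Lemma Q_matched q : Q q -> xlim q < pred (length q) -> exists t, matched q t.
Proof.
  intros Hq HX. destruct (xcut_eventually q) as [N HN].
  assert (Hon : forall n, N <= n -> exists t, is_tail t /\
    nth (ycut (xcut n) t) t v = nth (xlim q) q v /\ S (ycut (xcut n) t) < length t).
  { intros n Hn. destruct (xcut_last_or_ycut n q Hq) as [E|[t [Ht [[Hl _] Et]]]].
    - rewrite HN in E; lia.
    - exists t. rewrite HN in Et by auto. auto. }
  destruct (Hon N (le_n _)) as [t [Ht [Et Lt]]].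
  destruct (ycut_eventually t) as [N1 H1].
  destruct (Hon (N + N1)) as [t' [Ht' [Et' Lt']]]; [lia|].
  assert (t' = t) as ->.
  { apply (tail_unique_through t' t (nth (xlim q) q v)); auto using Q_nth_neq_v.
    - rewrite <- Et'. apply nth_In. lia.
    - rewrite <- Et. apply nth_In. lia. }
  exists t. rewrite H1 in Et' by lia. repeat split; auto.
Qed.

Definition reroute (q t : list V) : list V := splice q (xlim q) t (ylim t).

Section Reroute.
Variables q t : list V.
Hypothesis Hmatch : matched q t.

Lemma reroute_In w : In w (reroute q t) ->
  (exists m, m <= xlim q /\ nth m q v = w) \/
  (exists k, ylim t < k /\ k < length t /\ nth k t v = w).
Proof.
  destruct Hmatch as (_ & Ht & HX & _). pose proof (ylim_lt t Ht).
  apply splice_In; lia.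
Qed.

Lemma reroute_path : is_path (del_edge L r v) r v (reroute q t).
Proof.
  destruct Hmatch as (Hq & Ht & HX & HE).
  pose proof (ylim_lt t Ht) as HY.
  destruct (tail_facts t Ht) as (Nt & _ & Lastt & _).
  destruct (Q_path_facts q Hq) as (Nq & _ & q0 & _).
  assert (Hxl : xlim q < length q) by lia.
  assert (Hyl : ylim t < length t) by lia.
  apply (is_path_nth _ _ _ _ v). refine (conj _ (conj _ (conj _ (conj _ _)))).
  - intros E. pose proof (splice_length q t (xlim q) (ylim t) Hxl Hyl) as HL.
    unfold reroute in E. rewrite E in HL. simpl in HL. lia.
  - apply (splice_NoDup _ _ _ _ Hxl Hyl v); auto.
    intros i i' Hi Hi1 Hi2 E.
    destruct (Nat.eq_dec (S i') (length t)).
    + apply (Q_nth_neq_v q i Hq); [lia|]. rewrite E. replace i' with (pred (length t)) by lia.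
      exact Lastt.
    + apply (tail_beyond_ylim_misses_Q t q i' i); auto; lia.
  - apply walk_nth. apply (splice_walk _ _ _ _ Hxl Hyl v HE); auto using Q_walk, tail_walk.
  - unfold reroute. rewrite splice_nth_l by lia. exact q0.
  - unfold reroute. rewrite splice_last; auto.
Qed.

Lemma reroute_sep w : In w (reroute q t) -> Sep w -> w = nth (sep_index q) q v.
Proof.
  intros Hin Sw. destruct Hmatch as (Hq & Ht & _).
  destruct (Q_sep_index q Hq) as (Hs & _ & U & _).
  destruct (tail_facts t Ht) as (_ & _ & _ & _ & _ & _ & Sk).
  pose proof (ylim_lt t Ht).
  destruct (reroute_In w Hin) as [[m [Hm <-]]|[k [Hk1 [Hk2 <-]]]].
  - f_equal. apply U; auto. pose proof (xlim_le_last q). lia.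
  - exfalso. apply (Sk k); auto. lia.
Qed.

Lemma reroute_has_sep : In (nth (sep_index q) q v) (reroute q t).
Proof.
  destruct Hmatch as (Hq & Ht & HX & _). pose proof (ylim_lt t Ht).
  apply splice_In_l; [lia | lia | apply xlim_ge_sep; auto].
Qed.

Lemma reroute_term_edge e : term_edge t e -> term_edge (reroute q t) e.
Proof.
  destruct Hmatch as (_ & Ht & HX & HE). intros Hte.
  pose proof (ylim_lt t Ht) as HY.
  apply (term_edge_nth _ _ v) in Hte. destruct Hte as (Hl & E1 & E2).
  apply (term_edge_nth _ _ v). unfold reroute. rewrite splice_length by lia.
  split; [lia|split].
  - destruct (Nat.eq_dec (S (ylim t)) (length t - 1)).
    + replace (S (xlim q) + (length t - S (ylim t)) - 2) with (xlim q) by lia.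
      rewrite splice_nth_l, HE, <- E1 by lia. f_equal. lia.
    + rewrite splice_nth_r, <- E1 by lia. f_equal. lia.
  - rewrite splice_nth_r, <- E2 by lia. f_equal. lia.
Qed.

End Reroute.

Definition rerouted (p : list V) : Prop :=
  (Q p /\ xlim p = pred (length p)) \/
  (exists q t, matched q t /\ p = reroute q t) \/
  (p = [r; v] /\ L r v).

Lemma kept_rerouted_disjoint q1 q2 t2 w : Q q1 -> xlim q1 = pred (length q1) -> matched q2 t2 ->
  In w q1 -> In w (reroute q2 t2) -> w = r \/ w = v.
Proof.
  intros Hq1 HX1 Hm2 I1 I2. pose proof Hm2 as (Hq2 & Ht2 & HX2 & _).
  destruct (reroute_In q2 t2 Hm2 w I2) as [[m [Hm <-]]|[k [Hk1 [Hk2 <-]]]].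
  - assert (q1 <> q2) by (intros ->; lia).
    apply ((proj2 Q_system) q1 q2 Hq1 Hq2 H _ I1). apply nth_In. lia.
  - destruct (tail_facts t2 Ht2) as (_ & _ & Lastt & _).
    destruct (Nat.eq_dec (S k) (length t2)).
    + right. replace k with (pred (length t2)) by lia. exact Lastt.
    + exfalso. apply (In_nth_iff _ _ v) in I1. destruct I1 as [m [Hm Em]].
      apply (tail_beyond_ylim_misses_Q t2 q1 k m); auto; lia.
Qed.

(* A vertex beyond the crossing point of a tail lies on no other path, except the end v. *)
Lemma rerouted_disjoint_pair q1 t1 q2 t2 w : matched q1 t1 -> matched q2 t2 ->
  reroute q1 t1 <> reroute q2 t2 -> In w (reroute q1 t1) -> In w (reroute q2 t2) ->
  w = r \/ w = v.
Proof.
  intros Hm1 Hm2 Hne I1 I2.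
  pose proof Hm1 as (Hq1 & Ht1 & HX1 & HE1). pose proof Hm2 as (Hq2 & Ht2 & HX2 & HE2).
  pose proof (ylim_lt t1 Ht1). pose proof (ylim_lt t2 Ht2).
  destruct (ylim_inner t1 Ht1) as [Nv Nr].
  assert (Nq : q1 <> q2).
  { intros <-. apply Hne. f_equal.
    apply (tail_unique_through t1 t2 (nth (xlim q1) q1 v)); auto.
    - rewrite HE1. apply nth_In. lia.
    - rewrite HE2. apply nth_In. lia.
    - congruence. }
  assert (Nt : t1 <> t2).
  { intros <-. apply Nq.
    apply (Q_unique_through q1 q2 (nth (ylim t1) t1 v)); auto;
      [rewrite <- HE1 | rewrite <- HE2]; apply nth_In; lia. }
  destruct (reroute_In q1 t1 Hm1 w I1) as [[m1 [Hm1' E1]]|[k1 [Hk1 [Hk1' E1]]]];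
  destruct (reroute_In q2 t2 Hm2 w I2) as [[m2 [Hm2' E2]]|[k2 [Hk2 [Hk2' E2]]]].
  - apply ((proj2 Q_system) q1 q2 Hq1 Hq2 Nq w); [rewrite <- E1 | rewrite <- E2];
      apply nth_In; lia.
  - destruct (tail_facts t2 Ht2) as (_ & _ & Lastt & _).
    destruct (Nat.eq_dec (S k2) (length t2)).
    + right. rewrite <- E2. replace k2 with (pred (length t2)) by lia. exact Lastt.
    + exfalso. apply (tail_beyond_ylim_misses_Q t2 q1 k2 m1); auto; lia || congruence.
  - destruct (tail_facts t1 Ht1) as (_ & _ & Lastt & _).
    destruct (Nat.eq_dec (S k1) (length t1)).
    + right. rewrite <- E1. replace k1 with (pred (length t1)) by lia. exact Lastt.
    + exfalso. apply (tail_beyond_ylim_misses_Q t1 q2 k1 m2); auto; lia || congruence.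
  - destruct (classic (w = v)) as [Ev|Nwv]; [right; auto|].
    exfalso. apply Nt. apply (tail_unique_through t1 t2 w); auto;
      [rewrite <- E1 | rewrite <- E2]; apply nth_In; lia.
Qed.

Lemma rerouted_path p : rerouted p -> p <> [r; v] -> is_path (del_edge L r v) r v p.
Proof.
  intros [[Hq _]|[[q [t [Hm ->]]]|[-> _]]] Hne.
  - apply Q_path; auto.
  - apply reroute_path; auto.
  - congruence.
Qed.

Lemma rerouted_disjoint p1 p2 : rerouted p1 -> rerouted p2 -> p1 <> p2 ->
  forall w, In w p1 -> In w p2 -> w = r \/ w = v.
Proof.
  intros P1 P2 Hne w I1 I2.
  destruct P1 as [[Hq1 HX1]|[[q1 [t1 [Hm1 ->]]]|[-> _]]]; [| |simpl in I1; intuition];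
  (destruct P2 as [[Hq2 HX2]|[[q2 [t2 [Hm2 ->]]]|[-> _]]]; [| |simpl in I2; intuition]).
  - apply ((proj2 Q_system) p1 p2); auto.
  - apply (kept_rerouted_disjoint p1 q2 t2); auto.
  - apply (kept_rerouted_disjoint p2 q1 t1); auto.
  - apply (rerouted_disjoint_pair q1 t1 q2 t2); auto.
Qed.

Lemma rerouted_path_system : path_system L r v rerouted.
Proof.
  split; [|exact rerouted_disjoint].
  intros p Hp. destruct (classic (p = [r; v])) as [Erv|Hne].
  - destruct Hp as [[Hq _]|[[q [t [Hm E]]]|[-> HL]]].
    + apply (is_path_subrel (del_edge L r v)); [intros a b [? _]; auto|]. apply Q_path; auto.
    + apply (is_path_subrel (del_edge L r v)); [intros a b [? _]; auto|].
      rewrite E. apply reroute_path; auto.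
    + repeat split; simpl; auto. repeat constructor; simpl; intuition.
  - apply (is_path_subrel (del_edge L r v)); [intros a b [? _]; auto|].
    apply rerouted_path; auto.
Qed.

Lemma rerouted_orthogonal : orthogonal (remove_rv r v rerouted) Sep.
Proof.
  split.
  - intros p [Hp Hne].
    destruct Hp as [[Hq _]|[[q [t [Hm ->]]]|[-> _]]]; [| |congruence].
    + apply Q_orth_Sep; auto.
    + pose proof Hm as (Hq & _). destruct (Q_sep_index q Hq) as (_ & Hs & _).
      exists (nth (sep_index q) q v). split; [split; auto; apply reroute_has_sep; auto|].
      intros w [Iw Sw]. symmetry. apply (reroute_sep q t); auto.
  - intros w Sw. destruct (proj2 Q_orth_Sep w Sw) as [q [Hq Iw]].
    destruct (Q_sep_index q Hq) as (_ & Hs & U & _).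
    apply (In_nth_iff _ _ v) in Iw. destruct Iw as [i [Hi <-]].
    assert (i = sep_index q) as -> by (apply U; auto).
    assert (Hnrv : forall p, In (nth (sep_index q) q v) p -> p <> [r; v]).
    { destruct (Sep_not_ends _ Hs). intros p Ip ->. simpl in Ip. intuition. }
    pose proof (xlim_le_last q).
    destruct (Nat.eq_dec (xlim q) (pred (length q))) as [E|].
    + assert (Iq : In (nth (sep_index q) q v) q) by (apply nth_In; auto).
      exists q. split; [split; [left | apply Hnrv]|]; auto.
    + destruct (Q_matched q Hq ltac:(lia)) as [t Hm].
      pose proof (reroute_has_sep q t Hm) as Iqt.
      exists (reroute q t). split; [split; [right; left; exists q, t | apply Hnrv]|]; auto.
Qed.

Lemma rerouted_erdos_menger H :
  (forall a b, del_edge L r v a b -> H a b) -> (forall a b, H a b -> del_edge D r v a b) ->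
  erdos_menger H r v (remove_rv r v rerouted).
Proof.
  intros HL HD. split; [split|].
  - intros p [Hp Hne]. apply (is_path_subrel (del_edge L r v)); auto. apply rerouted_path; auto.
  - intros p1 p2 [P1 _] [P2 _]. apply rerouted_disjoint; auto.
  - exists Sep. split; [|exact rerouted_orthogonal].
    destruct Sep_separation as (Hne & _ & Hends & _).
    refine (conj Hne (conj _ (conj Hends _))).
    + intros Hrv. apply HD in Hrv. destruct Hrv as [_ []]. auto.
    + intros p Hp. apply Sep_meets_path. apply (is_path_subrel H); auto.
Qed.

Lemma rerouted_Eplus e : Eplus PI e -> Eplus rerouted e.
Proof.
  intros [p [Hp Hte]].
  destruct (classic (p = [r; v])) as [->|Hne].
  - apply term_edge_pair in Hte. subst e. exists [r; v]. split.
    + right; right. split; auto. destruct (proj1 PI_system _ Hp) as (_ & [Hrv _] & _). auto.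
    + exists []. reflexivity.
  - set (t := skipn (sep_index p) p).
    assert (Ht : is_tail t) by (exists p; auto).
    destruct (tail_matched t Ht) as [q Hm].
    exists (reroute q t). split; [right; left; exists q, t; auto|].
    apply reroute_term_edge; auto. apply term_edge_skipn; auto.
    destruct (PI_sep_index p Hp Hne). lia.
Qed.

End Rerouting.

Theorem corollary2p6 (V : Type) (D L : digraph V) (r v : V)
  (HD : loopless D) (Hv : v <> r) (HL : v_large D L r v) :
  forall I : V * V -> Prop, Gset L r v I ->
  exists P : list V -> Prop,
    path_system L r v P /\
    frakP D r v (remove_rv r v P) /\
    frakP L r v (remove_rv r v P) /\
    (forall e, I e -> Eplus P e).
Proof.
  intros I [_ [PI [HPI HIe]]].
  destruct HL as [Lsub [[Q [[HQ [Sep [HS HO]]] HQL]] _]].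
  exists (rerouted V L r v Q Sep PI). split; [|split; [|split]].
  - eapply rerouted_path_system; eauto.
  - eapply rerouted_erdos_menger; eauto. intros a b [Hab Hne]. split; auto.
  - eapply rerouted_erdos_menger; eauto. intros a b [Hab Hne]. split; auto.
  - intros e He. eapply rerouted_Eplus; eauto. apply HIe; auto.
Qed.
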